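(* Let $f\in C^2(\mathbb{R}^d)$ with $\nabla f$ globally $L$-Lipschitz, $h>0$, $\beta\ge0$, $c\le\gamma_k\le C$ ($0<c\le C$), and assume $\beta+\frac h2<\frac cL$. Let $(x_k)$ be generated by $y_k=x_k+\alpha_k(x_k-x_{k-1})-\beta_k(\nabla f(x_k)-\nabla f(x_{k-1}))$, $x_{k+1}=y_k-s_k\nabla f(x_k)$ ($k\ge1$), with $\alpha_k=\frac1{1+\gamma_kh}$, $\beta_k=\beta h\alpha_k$, $s_k=h^2\alpha_k$. Let $v_k=x_k-x_{k-1}$, $C_1=\frac1{h^2}+\frac{\beta L}h$ and $V_k=f(x_k)+\frac{C_1}2\|v_k\|^2$. Then for every $k\ge1$, $$V_{k+1}\le V_k-\delta\|v_{k+1}\|^2,\qquad \delta=\frac ch-\frac L2-\frac{\beta L}h>0.$$ *)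

From HB Require Import structures.
From mathcomp Require Import all_boot all_order all_algebra.
From mathcomp Require Import all_classical all_reals all_analysis.
Set Implicit Arguments. Unset Strict Implicit. Unset Printing Implicit Defensive.
Import Order.TTheory GRing.Theory Num.Theory.
Import numFieldNormedType.Exports.
Local Open Scope ring_scope.

Definition evec {R : realType} {d : nat} (i : 'I_d) : 'rV[R]_d := delta_mx 0 i.

Definition dotp {R : realType} {d : nat} (u v : 'rV[R]_d) : R :=
  \sum_(i < d) u 0 i * v 0 i.
Definition enorm {R : realType} {d : nat} (v : 'rV[R]_d) : R :=
  Num.sqrt (dotp v v).

Definition partial {R : realType} {d : nat} (i : 'I_d) (f : 'rV[R]_d -> R)
  : 'rV[R]_d -> R := fun x => 'D_(evec i) f x.

Definition grad {R : realType} {d : nat} (f : 'rV[R]_d -> R) (x : 'rV[R]_d)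
  : 'rV[R]_d := \row_(i < d) partial i f x.

Definition C2 {R : realType} {d : nat} (f : 'rV[R]_d -> R) : Prop :=
  continuous f /\
  (forall i x, derivable f x (evec i)) /\
  (forall i, continuous (partial i f)) /\
  (forall i j x, derivable (partial i f) x (evec j)) /\
  (forall i j, continuous (partial j (partial i f))).

Definition lipschitz_e {R : realType} {d : nat} (L : R) (g : 'rV[R]_d -> 'rV[R]_d)
  : Prop := forall x y, enorm (g x - g y) <= L * enorm (x - y).

(* The heart of the proof is the descent lemma
     f (x + u) <= f x + <grad f x, u> + L/2 |u|^2.
   Only partial derivatives are available, so it is obtained without a
   multivariate chain rule: moving along one coordinate at a time, the mean
   value theorem gives the crude bound d L |u|^2 on the first-order error;
   applying this bound on each of N equal pieces of the segment [x, x + u]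
   improves it to L/2 |u|^2 + d L |u|^2 / N, and N is arbitrary.
   The scheme itself reads
     (1 + gamma_k h) v_(k+1) = v_k - beta h (grad f x_k - grad f x_(k-1)) - h^2 grad f x_k;
   pairing it with v_(k+1) and bounding the two cross terms by Young's
   inequality, the first-order term of the descent lemma at x_k cancels and
   what is left is the claimed decrease of V. *)

From HB Require Import structures.
From mathcomp Require Import all_boot all_order all_algebra.
From mathcomp Require Import all_classical all_reals all_analysis.
From mathcomp Require Import ring lra.
Import Order.TTheory GRing.Theory Num.Theory.
Import numFieldNormedType.Exports.
Local Open Scope ring_scope.
Local Open Scope classical_set_scope.

Section Euclidean.
Context {R : realType} {d : nat}.
Implicit Types u v w : 'rV[R]_d.

Lemma dotpC u v : dotp u v = dotp v u.
Proof. by apply: eq_bigr => i _; rewrite mulrC. Qed.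

Lemma dotpDl u v w : dotp (u + v) w = dotp u w + dotp v w.
Proof. by rewrite /dotp -big_split; apply: eq_bigr => i _; rewrite !mxE mulrDl. Qed.

Lemma dotpZl a u w : dotp (a *: u) w = a * dotp u w.
Proof. by rewrite /dotp mulr_sumr; apply: eq_bigr => i _; rewrite !mxE mulrA. Qed.

Lemma dotpNl u w : dotp (- u) w = - dotp u w.
Proof. by rewrite -scaleN1r dotpZl mulN1r. Qed.

Lemma dotpBl u v w : dotp (u - v) w = dotp u w - dotp v w.
Proof. by rewrite dotpDl dotpNl. Qed.

Lemma dotp0l w : dotp 0 w = 0.
Proof. by rewrite -(scale0r (0 : 'rV[R]_d)) dotpZl mul0r. Qed.

Lemma dotpp_ge0 v : 0 <= dotp v v.
Proof. by apply: sumr_ge0 => i _; rewrite -expr2 sqr_ge0. Qed.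

Lemma enorm_ge0 v : 0 <= enorm v.
Proof. exact: sqrtr_ge0. Qed.

Lemma sqr_enorm v : enorm v ^+ 2 = dotp v v.
Proof. by rewrite sqr_sqrtr // dotpp_ge0. Qed.

Lemma dotpp_eq0 v : (dotp v v == 0) = (v == 0).
Proof.
apply/idP/eqP => [|->]; last by rewrite dotp0l.
rewrite /dotp psumr_eq0 => [/allP v0|i _]; last by rewrite -expr2 sqr_ge0.
by apply/rowP => i; apply/eqP; have := v0 i (mem_index_enum _); rewrite mxE -expr2 sqrf_eq0.
Qed.

Lemma enorm_eq0 v : (enorm v == 0) = (v == 0).
Proof. by rewrite -sqrf_eq0 sqr_enorm dotpp_eq0. Qed.

Lemma enormZ a v : enorm (a *: v) = `|a| * enorm v.
Proof.
by rewrite /enorm dotpZl dotpC dotpZl mulrA -expr2 sqrtrM ?sqr_ge0 // sqrtr_sqr.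
Qed.

Lemma enormN v : enorm (- v) = enorm v.
Proof. by rewrite -scaleN1r enormZ normrN1 mul1r. Qed.

Lemma normr_coord_le_enorm v i : `|v 0 i| <= enorm v.
Proof.
rewrite -(sqrtr_sqr (v 0 i)) ler_sqrt ?dotpp_ge0 // /dotp (bigD1 i) //= -expr2.
by rewrite lerDl; apply: sumr_ge0 => j _; rewrite -expr2 sqr_ge0.
Qed.

Lemma enorm_le_coordwise u v :
  (forall i, u 0 i ^+ 2 <= v 0 i ^+ 2) -> enorm u <= enorm v.
Proof. by move=> uv; rewrite ler_sqrt ?dotpp_ge0 //; apply: ler_sum => i _; rewrite -!expr2. Qed.

Lemma dotp_young u v (l : R) : 0 < l ->
  2 * dotp u v <= l * enorm u ^+ 2 + enorm v ^+ 2 / l.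
Proof.
move=> l_gt0; rewrite !sqr_enorm /dotp !mulr_sumr mulr_suml -big_split /=.
apply: ler_sum => i _; rewrite -subr_ge0.
have -> : l * (u 0 i * u 0 i) + v 0 i * v 0 i / l - 2 * (u 0 i * v 0 i)
          = (l * u 0 i - v 0 i) ^+ 2 / l by field; rewrite gt_eqF.
by rewrite divr_ge0 ?sqr_ge0 ?ltW.
Qed.

Lemma cauchy_schwarz u v : dotp u v <= enorm u * enorm v.
Proof.
have [->|u0] := eqVneq u 0; first by rewrite dotp0l mulr_ge0 ?enorm_ge0.
have [->|v0] := eqVneq v 0; first by rewrite dotpC dotp0l mulr_ge0 ?enorm_ge0.
have u_gt0 : 0 < enorm u by rewrite lt_def enorm_eq0 u0 enorm_ge0.
have v_gt0 : 0 < enorm v by rewrite lt_def enorm_eq0 v0 enorm_ge0.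
have := dotp_young u v _ (divr_gt0 v_gt0 u_gt0).
have -> : enorm v / enorm u * enorm u ^+ 2 + enorm v ^+ 2 / (enorm v / enorm u)
          = 2 * (enorm u * enorm v) by field; rewrite !gt_eqF.
by rewrite ler_pM2l.
Qed.

End Euclidean.

Section Descent.
Context {R : realType} {d : nat}.
Implicit Types u w z : 'rV[R]_d.

Lemma mvt_line (f : 'rV[R]_d -> R) (q e : 'rV[R]_d) (s : R) :
  (forall t : R, derivable f (q + t *: e) e) ->
  exists r : R, `|r| <= `|s| /\ f (q + s *: e) - f q = s * 'D_e f (q + r *: e).
Proof.
move=> f_der; pose phi t := f (q + t *: e).
have phi' (t : R) : is_derive t 1 phi ('D_e f (q + t *: e)).
  have E : (fun h : R => h^-1 *: ((phi \o shift t) (h *: 1) - phi t)) =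
           (fun h : R => h^-1 *: ((f \o shift (q + t *: e)) (h *: e) - f (q + t *: e))).
    by apply: funext => h /=; rewrite /phi [h%:A]mulr1 scalerDl addrCA addrA.
  by apply: DeriveDef; [rewrite /derivable E; exact: f_der | rewrite /derive E].
have phi_cont (a b : R) : {within `[a, b], continuous phi}.
  by apply: derivable_within_continuous => t _; case: (phi' t).
have phi0 : phi 0 = f q by rewrite /phi scale0r addr0.
have [s_ge0|s_lt0] := leP 0 s.
  have [r] := MVT_segment s_ge0 (fun t _ => phi' t) (phi_cont 0 s).
  rewrite in_itv /= => /andP[r_ge0 r_le] E; exists r.
  by rewrite !ger0_norm // ?(le_trans r_ge0 r_le) // -phi0 E subr0 mulrC.
have [r] := MVT_segment (ltW s_lt0) (fun t _ => phi' t) (phi_cont s 0).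
rewrite in_itv /= => /andP[r_ge r_le0] E; exists r; split.
  by rewrite !ler0_norm ?lerN2 ?(ltW s_lt0) // (le_trans r_ge r_le0).
by move: E; rewrite phi0 /phi; lra.
Qed.

Definition row_prefix w (m : nat) : 'rV[R]_d :=
  \row_j (if (j < m)%N then w 0 j else 0).

Lemma row_prefix0 w : row_prefix w 0 = 0.
Proof. by apply/rowP => j; rewrite !mxE ltn0. Qed.

Lemma row_prefix_full w : row_prefix w d = w.
Proof. by apply/rowP => j; rewrite !mxE ltn_ord. Qed.

Lemma row_prefixS w (i : 'I_d) : row_prefix w i.+1 = row_prefix w i + w 0 i *: evec i.
Proof.
apply/rowP => j; rewrite !mxE ltnS leq_eqVlt.
have [->|ji] := eqVneq j i; first by rewrite eqxx ltnn mulr1 add0r.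
by rewrite [_ == _ :> nat](negbTE ji) mulr0 addr0.
Qed.

Lemma sum_ord_natr (N : nat) : \sum_(j < N) (j%:R : R) = N%:R * (N%:R - 1) / 2.
Proof.
elim: N => [|N IH]; first by rewrite big_ord0 !mul0r.
by rewrite big_ord_recr /= IH -addn1 natrD; field.
Qed.

Variables (f : 'rV[R]_d -> R) (L : R).
Hypothesis f_partials : forall i x, derivable f x (evec i).
Hypothesis grad_lip : lipschitz_e L (grad f).
Hypothesis L_ge0 : 0 <= L.

Lemma grad_coord_lip z z' i :
  `|partial i f z - partial i f z'| <= L * enorm (z - z').
Proof.
have := normr_coord_le_enorm (grad f z - grad f z') i; rewrite !mxE.
by move/le_trans; apply; exact: grad_lip.
Qed.

Lemma descent_crude z w :
  f (z + w) - f z - dotp (grad f z) w <= d%:R * L * enorm w ^+ 2.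
Proof.
pose p m := z + row_prefix w m.
have -> : f (z + w) - f z = \sum_(i < d) (f (p i.+1) - f (p i)).
  rewrite -(big_mkord xpredT (fun i => f (p i.+1) - f (p i))) telescope_sumr //.
  by rewrite /p row_prefix_full row_prefix0 addr0.
have -> : d%:R * L * enorm w ^+ 2 = \sum_(i < d) (L * enorm w ^+ 2).
  by rewrite sumr_const card_ord -mulrA mulr_natl.
rewrite /dotp -sumrB.
apply: ler_sum => i _.
have [r [r_le E]] := mvt_line f (p i) (evec i) (w 0 i) (fun t => f_partials i _).
rewrite /p row_prefixS addrA E mxE [_ * w 0 i]mulrC -mulrBr.
set q := z + row_prefix w i + r *: evec i.
have qz_le : enorm (q - z) <= enorm w.
  rewrite /q addrAC [z + _ - _]addrAC subrr add0r.
  apply: enorm_le_coordwise => j; rewrite !mxE.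
  have [->|ji] := eqVneq j i.
    rewrite ltnn eqxx mulr1 add0r -[r ^+ 2](real_normK (num_real r)).
    by rewrite -[_ 0 i ^+ 2]real_normK ?num_real // lerXn2r ?nnegrE.
  by rewrite andbF mulr0 addr0; case: ifP => _; rewrite ?expr0n ?sqr_ge0.
apply: le_trans (ler_norm _) _; rewrite normrM expr2 mulrCA.
apply: ler_pM; rewrite ?normr_ge0 ?normr_coord_le_enorm //.
by apply: le_trans (grad_coord_lip q z i) _; exact: ler_wpM2l.
Qed.

Lemma descent_piece x u (t s : R) : 0 <= t -> 0 <= s ->
  f (x + t *: u + s *: u) - f (x + t *: u)
  <= s * dotp (grad f x) u + s * (L * t * enorm u ^+ 2) + d%:R * L * (s ^+ 2 * enorm u ^+ 2).
Proof.
move=> t_ge0 s_ge0; set z := x + t *: u.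
have crude := descent_crude z (s *: u).
rewrite enormZ exprMn ger0_norm // in crude.
have grad_var : dotp (grad f z - grad f x) u <= L * t * enorm u ^+ 2.
  apply: le_trans (cauchy_schwarz _ _) _; rewrite expr2 mulrA ler_wpM2r ?enorm_ge0 //.
  apply: le_trans (grad_lip z x) _.
  by rewrite /z addrAC subrr add0r enormZ ger0_norm // mulrA.
have := ler_wpM2l s_ge0 grad_var.
move: crude; rewrite dotpC dotpZl dotpC -[dotp (grad f z) u](subrK (dotp (grad f x) u)).
rewrite -dotpBl; lra.
Qed.

Lemma descent_subdiv x u (N : nat) : (0 < N)%N ->
  f (x + u) - f x - dotp (grad f x) u
  <= L / 2 * enorm u ^+ 2 + d%:R * L * enorm u ^+ 2 / N%:R.
Proof.
move=> N_gt0; have N_gt0' : 0 < (N%:R : R) by rewrite ltr0n.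
pose t (j : nat) : R := j%:R / N%:R.
set G := dotp (grad f x) u; set B := enorm u ^+ 2.
have piece j : f (x + t j.+1 *: u) - f (x + t j *: u)
    <= N%:R^-1 * G + N%:R^-1 * (L * t j * B) + d%:R * L * (N%:R^-1 ^+ 2 * B).
  have -> : x + t j.+1 *: u = x + t j *: u + N%:R^-1 *: u.
    by rewrite -addrA -scalerDl /t -[j.+1]addn1 natrD mulrDl div1r.
  by apply: descent_piece; rewrite ?divr_ge0 ?invr_ge0 ?ler0n ?ltW.
have -> : f (x + u) - f x = \sum_(j < N) (f (x + t j.+1 *: u) - f (x + t j *: u)).
  rewrite -(big_mkord xpredT (fun j => f (x + t j.+1 *: u) - f (x + t j *: u))).
  by rewrite telescope_sumr // /t mul0r scale0r addr0 divff ?gt_eqF // scale1r.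
have sum_t : \sum_(j < N) t j = (N%:R - 1) / 2.
  by rewrite /t -mulr_suml sum_ord_natr; field; rewrite gt_eqF.
rewrite lerBlDr; apply: le_trans (_ : _ <= \sum_(j < N) _) _.
  by apply: ler_sum => j _; exact: piece.
rewrite !big_split /= !sumr_const card_ord -!mulr_sumr -!mulr_suml -mulr_sumr sum_t.
rewrite -subr_ge0; set lhs := (X in _ - X); set rhs := (X in X - _).
have -> : rhs - lhs = L / 2 * B / N%:R by rewrite /lhs /rhs; field; rewrite gt_eqF.
by rewrite /B !mulr_ge0 ?invr_ge0 ?enorm_ge0 ?ler0n.
Qed.

Lemma descent x u : f (x + u) <= f x + dotp (grad f x) u + L / 2 * enorm u ^+ 2.
Proof.
rewrite -addrA -lerBlDl -lerBlDl; apply/ler_addgt0Pr => e e_gt0.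
set K := d%:R * L * enorm u ^+ 2.
pose N := (Num.truncn (K / e)).+1.
have N_gt0 : 0 < (N%:R : R) by rewrite ltr0n.
have KN : K / N%:R <= e.
  by rewrite ler_pdivrMr // mulrC -ler_pdivrMr // ltW // truncnS_gt.
apply: le_trans (descent_subdiv x u N (ltn0Sn _)) _.
by rewrite lerD2l -/K -/N.
Qed.

End Descent.

Lemma lyapunov_step_scalar (R : realFieldType) (h b L g c P Q1 Q2 U W F F' : R) :
  0 < h -> 0 <= b -> 0 < L -> c <= g -> 0 <= W -> 0 <= U ->
  (1 + g * h) * W = Q1 - b * h * Q2 - h ^+ 2 * P ->
  2 * Q1 <= U + W -> - (2 * Q2) <= L * U + L * W ->
  F' <= F + P + L / 2 * W ->
  F' + (1 / h ^+ 2 + b * L / h) / 2 * W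
  <= F + (1 / h ^+ 2 + b * L / h) / 2 * U - (c / h - L / 2 - b * L / h) * W.
Proof.
move=> h_gt0 b_ge0 L_gt0 cg W_ge0 U_ge0 EW Q1_le Q2_le descF.
have h2_gt0 : 0 < h ^+ 2 by rewrite exprn_gt0.
rewrite -(ler_pM2l h2_gt0).
have -> : h ^+ 2 * (F' + (1 / h ^+ 2 + b * L / h) / 2 * W)
          = h ^+ 2 * F' + (1 + b * L * h) / 2 * W by field; rewrite gt_eqF.
have -> : h ^+ 2 * (F + (1 / h ^+ 2 + b * L / h) / 2 * U - (c / h - L / 2 - b * L / h) * W)
          = h ^+ 2 * F + (1 + b * L * h) / 2 * U - (c * h - h ^+ 2 * L / 2 - b * L * h) * W.
  by field; rewrite gt_eqF.
(* After scaling by [h^2] the claim is a nonnegative combination of the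
   descent inequality, the two Young inequalities and [(g - c) h W >= 0]. *)
have := ler_wpM2l (ltW h2_gt0) descF.
have := ler_wpM2l (mulr_ge0 b_ge0 (ltW h_gt0)) Q2_le.
have : 0 <= (g - c) * h * W by rewrite !mulr_ge0 ?subr_ge0 // ltW.
nra.
Qed.

Lemma heavy_ball_step (R : realType) (d : nat) (f : 'rV[R]_d -> R) (L h beta c g : R)
    (x_prev x x_next : 'rV[R]_d) :
  (forall i z, derivable f z (evec i)) -> lipschitz_e L (grad f) -> 0 < L ->
  0 < h -> 0 <= beta -> 0 < c -> c <= g ->
  x_next = x + (1 / (1 + g * h)) *: (x - x_prev)
           - (beta * h * (1 / (1 + g * h))) *: (grad f x - grad f x_prev)
           - (h ^+ 2 * (1 / (1 + g * h))) *: grad f x ->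
  f x_next + (1 / h ^+ 2 + beta * L / h) / 2 * enorm (x_next - x) ^+ 2
  <= f x + (1 / h ^+ 2 + beta * L / h) / 2 * enorm (x - x_prev) ^+ 2
     - (c / h - L / 2 - beta * L / h) * enorm (x_next - x) ^+ 2.
Proof.
move=> f_partials grad_lip L_gt0 h_gt0 beta_ge0 c_gt0 cg E.
set v := x - x_prev; set v' := x_next - x; set Dg := grad f x - grad f x_prev.
have gh_gt0 : 0 < 1 + g * h by rewrite addr_gt0 // mulr_gt0 // (lt_le_trans c_gt0 cg).
have scheme : (1 + g * h) * enorm v' ^+ 2
    = dotp v v' - beta * h * dotp Dg v' - h ^+ 2 * dotp (grad f x) v'.
  have Ev' : v' = (1 / (1 + g * h)) *: (v - (beta * h) *: Dg - h ^+ 2 *: grad f x).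
    by rewrite /v' E; apply/rowP => j; rewrite !mxE; ring.
  by rewrite sqr_enorm {1}Ev' !(dotpZl, dotpBl); field; rewrite gt_eqF.
have descF := descent f L f_partials grad_lip (ltW L_gt0) x v'.
rewrite addrC subrK in descF.
have young_v := dotp_young v v' _ ltr01; rewrite mul1r divr1 in young_v.
have young_Dg : - (2 * dotp Dg v') <= L * enorm v ^+ 2 + L * enorm v' ^+ 2.
  have Linv_gt0 : 0 < L^-1 by rewrite invr_gt0.
  have := dotp_young (- Dg) v' _ Linv_gt0; rewrite dotpNl enormN invrK mulrN.
  have : L^-1 * enorm Dg ^+ 2 <= L * enorm v ^+ 2.
    have -> : L * enorm v ^+ 2 = L^-1 * (L * enorm v) ^+ 2 by field; rewrite gt_eqF.
    by rewrite ler_pM2l // ler_sqr ?nnegrE ?mulr_ge0 ?enorm_ge0 ?grad_lip ?ltW.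
  lra.
exact: lyapunov_step_scalar h_gt0 beta_ge0 L_gt0 cg (sqr_ge0 _) (sqr_ge0 _)
  scheme young_v young_Dg descF.
Qed.

Theorem mainTheorem7 (R : realType) (d : nat) (f : 'rV[R]_d -> R) (L h beta c C : R)
  (gamma : nat -> R) (x : nat -> 'rV[R]_d) :
  C2 f -> 0 < L -> lipschitz_e L (grad f) ->
  0 < h -> 0 <= beta -> 0 < c -> c <= C ->
  (forall k, (1 <= k)%N -> c <= gamma k <= C) ->
  beta + h / 2 < c / L ->
  (forall k, (1 <= k)%N ->
     let alpha := 1 / (1 + gamma k * h) in
     let betak := beta * h * alpha in
     let sk := h ^+ 2 * alpha in
     let y := x k + alpha *: (x k - x k.-1)
              - betak *: (grad f (x k) - grad f (x k.-1)) in
     x k.+1 = y - sk *: grad f (x k)) ->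
  let v := fun k => x k - x k.-1 in
  let C1 := 1 / h ^+ 2 + beta * L / h in
  let V := fun k => f (x k) + C1 / 2 * enorm (v k) ^+ 2 in
  let delta := c / h - L / 2 - beta * L / h in
  0 < delta /\
  (forall k, (1 <= k)%N -> V k.+1 <= V k - delta * enorm (v k.+1) ^+ 2).
Proof.
move=> [_ [f_partials _]] L_gt0 grad_lip h_gt0 beta_ge0 c_gt0 _ gamma_bd small_step scheme.
move=> v C1 V delta; split.
  have -> : delta = (c - (beta + h / 2) * L) / h by rewrite /delta; field; rewrite gt_eqF.
  by rewrite divr_gt0 // subr_gt0 -ltr_pdivlMr.
move=> k k_ge1; have /andP[c_le _] := gamma_bd k k_ge1.
exact: heavy_ball_step f_partials grad_lip L_gt0 h_gt0 beta_ge0 c_gt0 c_le (scheme k k_ge1).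
Qed.
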